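(* Let $S$ be a monoid such that the word $xy$ ($x\ne y$) is an isoterm for $S$. Suppose that $S$ satisfies an identity $\mathbf u\approx\mathbf v$ and that there are a substitution $\Theta:\mathfrak A\to\mathfrak A^+$ and a variable $x$ that occurs exactly twice in both $\mathbf U=\Theta(\mathbf u)$ and $\mathbf V=\Theta(\mathbf v)$. Then $l_{\mathbf u,\mathbf v}(\Theta^{-1}_{\mathbf u}({}_{1\mathbf U}x))=\Theta^{-1}_{\mathbf v}({}_{1\mathbf V}x)$ and $l_{\mathbf u,\mathbf v}(\Theta^{-1}_{\mathbf u}({}_{2\mathbf U}x))=\Theta^{-1}_{\mathbf v}({}_{2\mathbf V}x)$.
   Context: $\mathfrak A$ is a countably infinite alphabet of variables; words are elements of $\mathfrak A^+$; a substitution is a homomorphism $\Theta:\mathfrak A^+\to\mathfrak A^+$. A monoid $S$ satisfies $\mathbf u\approx\mathbf v$ if both sides agree under all evaluations in $S$; a word is an isoterm for $S$ if it forms no nontrivial identity of $S$. ${}_{i\mathbf w}z$ denotes the $i$-th occurrence of $z$ in $\mathbf w$, and $\mathrm{occ}_{\mathbf w}(z)$ the number of occurrences. $l_{\mathbf u,\mathbf v}$ is the map ${}_{i\mathbf u}z\mapsto{}_{i\mathbf v}z$ for $i\le\min(\mathrm{occ}_{\mathbf u}(z),\mathrm{occ}_{\mathbf v}(z))$. If $\mathbf u=a_1\cdots a_k$ (letters) and $\mathbf U=\Theta(\mathbf u)=\Theta(a_1)\cdots\Theta(a_k)$, then each occurrence $c$ of a variable in $\mathbf U$ lies in a unique block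 $\Theta(a_j)$; $\Theta^{-1}_{\mathbf u}(c)$ is defined as the occurrence in $\mathbf u$ given by the $j$-th letter $a_j$. *)

(* Variables of the alphabet A are natural numbers (countably
   infinite); a word is a nonempty  seq nat . *)
From mathcomp Require Import all_boot.
Set Implicit Arguments. Unset Strict Implicit. Unset Printing Implicit Defensive.

Definition word := seq nat.

Record is_monoid (T : Type) (mul : T -> T -> T) (one : T) : Prop := {
  mon_assoc : forall a b c, mul a (mul b c) = mul (mul a b) c;
  mon_mul1 : forall a, mul one a = a;
  mon_mul0 : forall a, mul a one = a }.

Definition eval_word (T : Type) (mul : T -> T -> T) (one : T)
  (phi : nat -> T) (w : word) : T :=
  foldr (fun a acc => mul (phi a) acc) one w.

Definition satisfies (T : Type) (mul : T -> T -> T) (one : T) (u v : word) : Prop :=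
  forall phi : nat -> T, eval_word mul one phi u = eval_word mul one phi v.

(* w is an isoterm for S: S satisfies no nontrivial identity w ~ w'
   (w' ranging over words, i.e. nonempty sequences). *)
Definition isoterm (T : Type) (mul : T -> T -> T) (one : T) (w : word) : Prop :=
  forall w' : word, 0 < size w' -> satisfies mul one w w' -> w' = w.

Definition subst (Th : nat -> word) (u : word) : word := flatten (map Th u).

(* Occurrences are pairs (z, i) standing for the i-th occurrence (1-based)
   of the variable z. *)
Definition occurrence := (nat * nat)%type.

(* 0-based position in w of the i-th occurrence of z (meaningful when
   1 <= i <= count_mem z w). *)
Fixpoint pos_occ (w : word) (z i : nat) : nat :=
  match w with
  | [::] => 0
  | a :: w' => if a == z then (if i == 1 then 0 else (pos_occ w' z i.-1).+1)
               else (pos_occ w' z i).+1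
  end.

Definition occ_of_pos (w : word) (j : nat) : occurrence :=
  let z := nth 0 w j in (z, count_mem z (take j.+1 w)).

Fixpoint block_idx (Th : nat -> word) (u : word) (p : nat) : nat :=
  match u with
  | [::] => 0
  | a :: u' => if p < size (Th a) then 0 else (block_idx Th u' (p - size (Th a))).+1
  end.

Definition theta_inv (Th : nat -> word) (u : word) (c : occurrence) : occurrence :=
  occ_of_pos u (block_idx Th u (pos_occ (subst Th u) c.1 c.2)).

Definition l_map (u v : word) (c : occurrence) : option occurrence :=
  if (0 < c.2) && (c.2 <= minn (count_mem c.1 u) (count_mem c.1 v))
  then Some c else None.

(* Since xy is an isoterm, an identity u ~ v of S preserves the number of
   occurrences of every variable occurring at most once, and the relative order of
   any two variables occurring exactly once on both sides. A variable t whose image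
   Theta(t) contains x occurs at most twice in u, hence equally often in u and v.
   If the i-th x of U lies in the block of the k-th occurrence of t in u, then the
   prefixes before the k-th t in u and in v have images with the same number of x's:
   otherwise some s with x in Theta(s) would precede t on one side and follow it on
   the other, both occurring once, against order preservation. So the i-th x of V
   lies in the block of the k-th t of v. *)

From mathcomp Require Import all_boot zify.

Set Implicit Arguments.
Unset Strict Implicit.

Lemma count_mem_cons (z c : nat) (w : word) :
  count_mem z (c :: w) = (c == z) + count_mem z w.
Proof. by []. Qed.

Lemma count_mem_gt0 (z : nat) (w : word) : (0 < count_mem z w) = (z \in w).
Proof. by rewrite -has_count has_pred1. Qed.

Lemma pos_occ_catr (z : nat) (w1 w2 : word) (j : nat) :
  count_mem z w1 < j ->
  pos_occ (w1 ++ w2) z j = size w1 + pos_occ w2 z (j - count_mem z w1).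
Proof.
elim: w1 j => [|c w1 IH] j /= hj; first by rewrite subn0.
case: eqP hj => _ hj; last by rewrite IH.
case: j hj => [|[|j]] //= hj.
by rewrite IH ?subSS // -ltnS.
Qed.

Lemma pos_occ_catl (z : nat) (w1 w2 : word) (j : nat) :
  0 < j <= count_mem z w1 -> pos_occ (w1 ++ w2) z j < size w1.
Proof.
elim: w1 j => [|c w1 IH] j /=; first by case: j.
case: eqP => _ hj; last by rewrite ltnS IH.
by case: j hj => [|[|j]] //= hj; rewrite ltnS IH.
Qed.

Lemma subst_cat (Th : nat -> word) (w1 w2 : word) :
  subst Th (w1 ++ w2) = subst Th w1 ++ subst Th w2.
Proof. by rewrite /subst map_cat flatten_cat. Qed.

Lemma subst_cons (Th : nat -> word) (c : nat) (w : word) :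
  subst Th (c :: w) = Th c ++ subst Th w.
Proof. by []. Qed.

Lemma block_idx_cat (Th : nat -> word) (w1 w2 : word) (q : nat) :
  block_idx Th (w1 ++ w2) (size (subst Th w1) + q) = size w1 + block_idx Th w2 q.
Proof.
elim: w1 => [|c w1 IH] //=.
by rewrite size_cat -addnA ltnNge leq_addr /= addKn IH.
Qed.

Lemma count_subst_cat (Th : nat -> word) (z : nat) (w1 w2 : word) :
  count_mem z (subst Th (w1 ++ w2)) =
    count_mem z (subst Th w1) + count_mem z (subst Th w2).
Proof. by rewrite subst_cat count_cat. Qed.

Lemma count_subst_cons (Th : nat -> word) (z c : nat) (w : word) :
  count_mem z (subst Th (c :: w)) = count_mem z (Th c) + count_mem z (subst Th w).
Proof. by rewrite subst_cons count_cat. Qed.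

Lemma theta_inv_cat_cons (Th : nat -> word) (w1 w2 : word) (t z i : nat) :
  count_mem z (subst Th w1) < i <= count_mem z (subst Th w1) + count_mem z (Th t) ->
  theta_inv Th (w1 ++ t :: w2) (z, i) = (t, (count_mem t w1).+1).
Proof.
case/andP=> lt_i le_i.
rewrite /theta_inv /= subst_cat subst_cons pos_occ_catr // block_idx_cat /=.
rewrite pos_occ_catl ?subn_gt0 ?leq_subLR ?lt_i //= addn0 /occ_of_pos.
rewrite nth_cat ltnn subnn take_cat ltnNge leqnSn subSnn /=.
by rewrite count_cat /= eqxx take0 addn1.
Qed.

Lemma count_subst_ge (Th : nat -> word) (z p : nat) (w : word) :
  count_mem p w * count_mem z (Th p) <= count_mem z (subst Th w).
Proof.
elim: w => [|c w IH] //.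
by rewrite count_subst_cons count_mem_cons mulnDl; case: eqP => [->|_]; nia.
Qed.

Lemma count_subst_ge2 (Th : nat -> word) (z p q : nat) (w : word) : p != q ->
  count_mem p w * count_mem z (Th p) + count_mem q w * count_mem z (Th q)
    <= count_mem z (subst Th w).
Proof.
move=> neq_pq; elim: w => [|c w IH] //.
rewrite count_subst_cons !count_mem_cons !mulnDl.
case: (c =P p) => [->|_]; first by rewrite (negbTE neq_pq); nia.
by case: eqP => [->|_]; nia.
Qed.

Lemma count_subst_gt0 (Th : nat -> word) (z : nat) (w : word) :
  0 < count_mem z (subst Th w) -> exists2 s, s \in w & 0 < count_mem z (Th s).
Proof.
elim: w => [|c w IH] //; rewrite count_subst_cons.
case: (posnP (count_mem z (Th c))) => [-> /IH [s s_w zs]|zc _].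
  by exists s; rewrite // in_cons s_w orbT.
by exists c; rewrite ?mem_head.
Qed.

Lemma split_count_mem (z : nat) (w : word) (n : nat) : n < count_mem z w ->
  exists w1 w2, w = w1 ++ z :: w2 /\ count_mem z w1 = n.
Proof.
elim: w n => [|c w IH] n //; rewrite count_mem_cons.
case: (c =P z) => [->|ne_cz]; last first.
  case/IH=> w1 [w2 [-> <-]]; exists (c :: w1), w2.
  by rewrite count_mem_cons (introF eqP ne_cz).
case: n => [|n]; first by exists [::], w.
by case/IH=> w1 [w2 [-> <-]]; exists (z :: w1), w2; rewrite count_mem_cons eqxx.
Qed.

Lemma split_subst_count (Th : nat -> word) (z : nat) (w : word) (i : nat) :
  0 < i <= count_mem z (subst Th w) ->
  exists w1 t w2, w = w1 ++ t :: w2 /\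
    count_mem z (subst Th w1) < i <= count_mem z (subst Th w1) + count_mem z (Th t).
Proof.
elim: w i => [|c w IH] i; first by case/andP=> /gtn_eqF; rewrite leqn0 => ->.
rewrite count_subst_cons => /andP [i_gt0 le_i].
case: (leqP i (count_mem z (Th c))) => [le_ic|lt_ci].
  by exists [::], c, w; rewrite /= i_gt0 le_ic.
have [|w1 [t [w2 [-> /andP [lt_w1 le_w1]]]]] := IH (i - count_mem z (Th c)).
  apply/andP; split; lia.
exists (c :: w1), t, w2; split => //.
rewrite count_subst_cons; apply/andP; split; lia.
Qed.

Lemma satisfies_sym (T : Type) (mul : T -> T -> T) (one : T) (u v : word) :
  satisfies mul one u v -> satisfies mul one v u.
Proof. by move=> Huv phi; rewrite Huv. Qed.

Section Monoid.

Variables (T : Type) (mul : T -> T -> T) (one : T).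
Hypothesis HS : is_monoid mul one.

Local Notation eval := (eval_word mul one).

Lemma eval_word_cat (phi : nat -> T) (w1 w2 : word) :
  eval phi (w1 ++ w2) = mul (eval phi w1) (eval phi w2).
Proof.
elim: w1 => [|c w1 IH]; first by rewrite (mon_mul1 HS).
by rewrite /eval_word /= -!/(eval_word _ _ _ _) IH (mon_assoc HS).
Qed.

Lemma eval_word_nseq (phi : nat -> T) (n c : nat) (w : word) :
  eval phi (nseq n c ++ w) = iter n (mul (phi c)) (eval phi w).
Proof. by elim: n => [|n IH] //=; rewrite -IH. Qed.

Lemma iter_mul_one (g y : T) (n : nat) : mul (iter n (mul g) one) y = iter n (mul g) y.
Proof.
elim: n => [|n IH]; first by rewrite (mon_mul1 HS).
by rewrite /= -(mon_assoc HS) IH.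
Qed.

Lemma eval_word_single (phi : nat -> T) (z : nat) (w : word) :
  {in w, forall t, t != z -> phi t = one} ->
  eval phi w = iter (count_mem z w) (mul (phi z)) one.
Proof.
elim: w => [|c w IH] //= phi1.
rewrite /eval_word /= -/(eval_word _ _ _ _) IH => [|t w_t]; last first.
  by apply: phi1; rewrite in_cons w_t orbT.
case: eqP => [->|/eqP ne_cz] //.
by rewrite phi1 ?mem_head // (mon_mul1 HS).
Qed.

Lemma eval_word_pair (phi : nat -> T) (p q : nat) (w : word) :
  {in w, forall t, t != p -> t != q -> phi t = one} ->
  count_mem p w = 1 -> count_mem q w = 1 -> index p w < index q w ->
  eval phi w = mul (phi p) (phi q).
Proof.
move=> phi1 p_w q_w lt_pq.
have ne_pq : p != q by apply: contraTneq lt_pq => ->; rewrite ltnn.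
have [|w1 [w2 [def_w /count_memPn p_w1]]] := @split_count_mem p w 0.
  by rewrite p_w.
have q_w1 : q \notin w1.
  apply: contraTN lt_pq; rewrite def_w !index_cat (negbTE p_w1) index_head addn0 => q_w1.
  by rewrite q_w1 -leqNgt ltnW ?index_mem.
move: p_w q_w phi1; rewrite def_w !count_cat !count_mem_cons eqxx (negbTE ne_pq).
rewrite (count_memPn p_w1) (count_memPn q_w1) add0n => -[/count_memPn p_w2] q_w2 phi1.
have in_w t : t \in w1 \/ t \in w2 -> t \in w1 ++ p :: w2.
  by rewrite mem_cat in_cons => -[->|->]; rewrite ?orbT.
rewrite eval_word_cat (@eval_word_single _ p w1) => [|t w1_t ne_tp]; last first.
  by apply: phi1 => //; [apply: in_w; left | apply: contraNneq q_w1 => <-].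
rewrite (count_memPn p_w1) (mon_mul1 HS).
change (eval phi (p :: w2)) with (mul (phi p) (eval phi w2)).
rewrite (@eval_word_single _ q w2) => [|t w2_t ne_tq]; last first.
  by apply: phi1 => //; [apply: in_w; right | apply: contraNneq p_w2 => <-].
have -> : count_mem q w2 = 1 by lia.
by rewrite /= (mon_mul0 HS).
Qed.

Section Isoterm.

Variables (a b : nat).
Hypotheses (hab : a <> b) (Hiso : isoterm mul one [:: a; b]).

(* With m := count_mem z u <= 1, the identity g^m = g^n (n := count_mem z v) of S
   makes a^(1-m+n) b ~ a b an identity of S. *)
Lemma satisfies_count_le1 (u v : word) (z : nat) :
  satisfies mul one u v -> count_mem z u <= 1 -> count_mem z v = count_mem z u.
Proof.
move=> Huv le_zu.
have pow_eq g y : iter (count_mem z u) (mul g) y = iter (count_mem z v) (mul g) y.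
  have := Huv (fun t => if t == z then g else one).
  rewrite !(@eval_word_single _ z) ?eqxx => [E|t _ /negbTE->//|t _ /negbTE->//].
  by rewrite -iter_mul_one E iter_mul_one.
have /(congr1 size) : nseq ((1 - count_mem z u) + count_mem z v) a ++ [:: b] = [:: a; b].
  apply: Hiso => [|psi]; first by rewrite size_cat addn1.
  by rewrite eval_word_nseq iterD -pow_eq -iterD subnK.
rewrite size_cat size_nseq; change (size [:: b]) with 1; change (size [:: a; b]) with 2.
lia.
Qed.

Lemma satisfies_no_swap (u v : word) (p q : nat) : satisfies mul one u v ->
  count_mem p u = 1 -> count_mem q u = 1 -> count_mem p v = 1 -> count_mem q v = 1 ->
  index p u < index q u -> index q v < index p v -> False.
Proof.
move=> Huv p_u q_u p_v q_v lt_pq_u lt_qp_v.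
have ne_pq : p != q by apply: contraTneq lt_pq_u => ->; rewrite ltnn.
suff : [:: b; a] = [:: a; b] by case=> /esym/hab.
apply: Hiso => // psi.
pose phi t := if t == p then psi a else if t == q then psi b else one.
have phi1 t : t != p -> t != q -> phi t = one.
  by move=> /negbTE ne_tp /negbTE ne_tq; rewrite /phi ne_tp ne_tq.
have phi_p : phi p = psi a by rewrite /phi eqxx.
have phi_q : phi q = psi b by rewrite /phi eq_sym (negbTE ne_pq) eqxx.
have := Huv phi; rewrite (@eval_word_pair _ p q u (in1W phi1)) //.
rewrite (@eval_word_pair _ q p v (in1W (fun t ne_tq ne_tp => phi1 t ne_tp ne_tq))) //.
by rewrite phi_p phi_q /= !(mon_mul0 HS).
Qed.

Section Substitution.

Variables (Th : nat -> word) (x : nat).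

Local Notation occx w := (count_mem x (subst Th w)).

Lemma satisfies_count_block (u v : word) (z : nat) :
  satisfies mul one u v -> occx u = 2 -> occx v = 2 ->
  0 < count_mem x (Th z) -> count_mem z u = count_mem z v.
Proof.
move=> Huv xu xv xz.
have := count_subst_ge Th x z u; have := count_subst_ge Th x z v.
rewrite xu xv => le_v le_u.
case: (leqP (count_mem z u) 1) => [/(satisfies_count_le1 Huv)->//|lt_u].
case: (leqP (count_mem z v) 1) => [/(satisfies_count_le1 (satisfies_sym Huv))->//|lt_v].
nia.
Qed.

Lemma satisfies_prefix_count0 (u v u1 u2 v1 v2 : word) (t : nat) :
  satisfies mul one u v -> occx u = 2 -> occx v = 2 ->
  u = u1 ++ t :: u2 -> v = v1 ++ t :: v2 -> t \notin u1 -> t \notin v1 ->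
  0 < count_mem x (Th t) -> occx u1 = 0 -> occx v1 = 0.
Proof.
move=> Huv xu xv def_u def_v t_u1 t_v1 xt xu1.
case: (posnP (occx v1)) => // /count_subst_gt0 [s s_v1 xs]; exfalso.
have s_u1 : s \notin u1.
  rewrite -count_mem_gt0 -eqn0Ngt -leqn0 -(leq_pmul2r xs) mul0n -xu1.
  exact: count_subst_ge.
have ne_st : s != t by apply: contraNneq t_v1 => <-.
have t_v : 0 < count_mem t v by rewrite count_mem_gt0 def_v mem_cat mem_head orbT.
have s_v : 0 < count_mem s v by rewrite count_mem_gt0 def_v mem_cat s_v1.
have := @count_subst_ge2 Th x s t v ne_st; rewrite xv => le2.
have s_v_once : count_mem s v = 1 by nia.
have t_v_once : count_mem t v = 1 by nia.
apply: (satisfies_no_swap (p := t) (q := s) Huv) => //.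
- by rewrite (satisfies_count_block Huv xu xv xt).
- by rewrite (satisfies_count_block Huv xu xv xs).
- rewrite def_u !index_cat (negbTE t_u1) (negbTE s_u1) index_head /=.
  by rewrite eq_sym (negbTE ne_st) ltn_add2l.
- by rewrite def_v !index_cat s_v1 (negbTE t_v1) index_head addn0 index_mem.
Qed.

Lemma satisfies_prefix_count (u v u1 u2 v1 v2 : word) (t : nat) :
  satisfies mul one u v -> occx u = 2 -> occx v = 2 ->
  u = u1 ++ t :: u2 -> v = v1 ++ t :: v2 ->
  0 < count_mem x (Th t) -> count_mem t u1 = count_mem t v1 -> occx u1 = occx v1.
Proof.
move=> Huv xu xv def_u def_v xt eq_t.
have occ_u : occx u1 + count_mem x (Th t) + occx u2 = 2.
  by rewrite -xu def_u count_subst_cat count_subst_cons addnA.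
have occ_v : occx v1 + count_mem x (Th t) + occx v2 = 2.
  by rewrite -xv def_v count_subst_cat count_subst_cons addnA.
have := @count_subst_ge Th x t u1; have := @count_subst_ge Th x t v1.
(* If t already occurs in u1, the two occurrences of t carry both x's of U. *)
case: (posnP (count_mem t u1)) => [t_u1|]; last by nia.
have t_v1 : t \notin v1 by rewrite -count_mem_gt0 -eq_t t_u1.
move/count_memPn in t_u1.
have := satisfies_prefix_count0 Huv xu xv def_u def_v t_u1 t_v1 xt.
have := satisfies_prefix_count0 (satisfies_sym Huv) xv xu def_v def_u t_v1 t_u1 xt.
lia.
Qed.

Lemma l_map_theta_inv (u v : word) (i : nat) :
  satisfies mul one u v -> occx u = 2 -> occx v = 2 -> 0 < i <= 2 ->
  l_map u v (theta_inv Th u (x, i)) = Some (theta_inv Th v (x, i)).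
Proof.
move=> Huv xu xv i_le2.
have [u1 [t [u2 [def_u i_in_t]]]] : exists u1 t u2, u = u1 ++ t :: u2 /\
    occx u1 < i <= occx u1 + count_mem x (Th t).
  by apply: split_subst_count; rewrite xu.
have xt : 0 < count_mem x (Th t) by case/andP: i_in_t; lia.
have t_u : count_mem t u = count_mem t u1 + (count_mem t u2).+1.
  by rewrite def_u count_cat count_mem_cons eqxx addSn addnS.
have eq_t := satisfies_count_block Huv xu xv xt.
have [|v1 [v2 [def_v t_v1]]] := @split_count_mem t v (count_mem t u1).
  by rewrite -eq_t t_u addnS ltnS leq_addr.
have eq_prefix := satisfies_prefix_count Huv xu xv def_u def_v xt (esym t_v1).
have i_in_t_v : occx v1 < i <= occx v1 + count_mem x (Th t) by rewrite -eq_prefix.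
rewrite def_u (theta_inv_cat_cons _ i_in_t) -def_u.
rewrite def_v (theta_inv_cat_cons _ i_in_t_v) -def_v.
by rewrite /l_map /= t_v1 leq_min -eq_t t_u addnS ltnS leq_addr.
Qed.

End Substitution.

End Isoterm.

End Monoid.

Theorem lemma4p3 (T : Type) (mul : T -> T -> T) (one : T)
  (HS : is_monoid mul one)
  (a b : nat) (hab : a <> b) (Hiso : isoterm mul one [:: a; b])
  (u v : word) (hu : 0 < size u) (hv : 0 < size v)
  (Huv : satisfies mul one u v)
  (Th : nat -> word) (HTh : forall y, 0 < size (Th y))
  (x : nat)
  (HU : count_mem x (subst Th u) = 2) (HV : count_mem x (subst Th v) = 2) :
  l_map u v (theta_inv Th u (x, 1)) = Some (theta_inv Th v (x, 1)) /\
  l_map u v (theta_inv Th u (x, 2)) = Some (theta_inv Th v (x, 2)).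
Proof. by split; apply: (l_map_theta_inv HS hab Hiso). Qed.
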